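(* Let $i(C,R)$ be an initial rule and $\mathrm{H}$ a set of Horn rules. Then $(\triangleright^{1} i(C,R)\ \triangleright^{0}\mathrm{H})\preceq i(C,R)\oplus\mathbf{G}(\mathrm{H})$; that is, every g-sequent obtained by an application of $i(C,R)$ followed by zero or more applications of rules from $\mathrm H$ is a conclusion of the initial rule $i(C,R)\oplus\mathbf G(\mathrm H)$.
   Context: Fix a countably infinite set $\mathtt{S}$ of sequents (atomic labels), a set $\mathcal{U}$ of vertices, and a non-empty finite set $\mathtt{E}$ of edge types. A g-sequent is $\mathcal{G}=(\mathcal{V},\mathcal{E},\mathcal{L})$ with $\mathcal{V}\subseteq\mathcal{U}$, $\mathcal{E}=\{\mathcal{E}_a\mid a\in\mathtt{E}\}$, $\mathcal{E}_a\subseteq\mathcal{V}\times\mathcal{V}$, $\mathcal{L}:\mathcal{V}\to\mathtt{S}$; written $\Gamma\vdash\Delta$ with $\Gamma$ the set of edge atoms $w\mathcal{E}_a u$ ($(w,u)\in\mathcal{E}_a$) and $\Delta$ the set of prefixed sequents $w:S$ ($\mathcal{L}(w)=S$); $\mathtt{PS}=\mathcal{U}\times\mathtt{S}$; commas denote disjoint union. Let $\overline{\mathtt E}=\{\bar a\mid a\in\mathtt E\}$, $\bar{\bar z}=z$, $\overline{x_1\cdots x_n}=\bar x_n\cdots\bar x_1$, $\varepsilon$ the empty string. Paths: $\mathcal{G}\models u\xrightarrow{a}w$ iff $(u,w)\in\mathcal{E}_a$; $\mathcal{G}\models u\xrightarrow{\bar a}w$ iff $(w,u)\in\mathcal{E}_a$;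 $u\xrightarrow{\varepsilon}w$ iff $u=w$; $u\xrightarrow{xs}w$ iff some $v$ has $u\xrightarrow{x}v$ and $v\xrightarrow{s}w$; $u\xrightarrow{\mathscr L}w$ iff $u\xrightarrow{s}w$ for some $s\in\mathscr L$. An $\mathtt{E}$-system is a finite set $\mathbf{G}$ of production rules $x\longrightarrow t$ with $x\in\mathtt{E}\cup\overline{\mathtt{E}}$, $t$ a string over $\mathtt E\cup\overline{\mathtt E}$, closed under $x\longrightarrow t\mapsto\bar x\longrightarrow\bar t$; $\mathbf{G}(s)=\{t\mid s\longrightarrow^*_{\mathbf{G}}t\}$ where $\longrightarrow^*_{\mathbf G}$ is the reflexive-transitive closure of one-step rewriting of a single occurrence of a left side. A constraint is a finite tree $C=(V,E,L)$ with $V\subseteq\mathcal U$, each edge $(w,u)\in E$ labelled $L(w,u)=\mathbf G'(a)$ for some $a\in\mathtt E$ and $\mathtt E$-system $\mathbf G'$. A g-sequent $\mathcal G$ with $V\subseteq\mathcal U(\mathcal G)$ satisfies $C$ iff $\mathcal G\models w\xrightarrow{\mathbf G'(a)}u$ for every edge with $L(w,u)=\mathbf G'(a)$. A sequent constraint is $R\subseteq\mathtt S^n\times2^{\mathtt{PS}}$; $S_1,\dots,S_n,\Delta$ satisfy $R$ iff $(S_{\pi(1)},\dots,S_{\pi(n)},\Delta)\in R$ for some permutation $\pi$. An initial rule $i(C,R)$ has no premises and conclusion any $\Gamma\vdash\Delta=(\mathcal V,\mathcal E,\mathcal L)$ that satisfies $C=(V,E,L)$, $V=\{w_1,\dots,w_n\}$,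 such that $\mathcal L(w_1),\dots,\mathcal L(w_n)$ and $\Delta\setminus\{w_i:\mathcal L(w_i)\mid i\in[n]\}$ satisfy $R$. For $s=x_1\cdots x_n$, $w\mathcal{E}_s u$ abbreviates edge atoms $w\mathcal{E}_{x_1}v_1,\dots,v_{n-1}\mathcal{E}_{x_n}u$, with $v\mathcal E_{\bar a}z$ meaning $z\mathcal E_a v$ and $w\mathcal E_\varepsilon u$ meaning $w=u$. A forward Horn rule $h_f$ (for $a\in\mathtt E$, string $s$) has premise $\Gamma,w\mathcal{E}_s u,w\mathcal{E}_a u\vdash\Delta$ and conclusion $\Gamma,w\mathcal{E}_s u\vdash\Delta$; a backward Horn rule $h_b$ is the same with $w\mathcal{E}_a u$ replaced by $u\mathcal{E}_a w$. $\mathbf{G}(h_f)=\{a\longrightarrow s,\bar a\longrightarrow\bar s\}$, $\mathbf{G}(h_b)=\{\bar a\longrightarrow s,a\longrightarrow\bar s\}$, and $\mathbf G(\mathrm H)$ is the union over $\mathrm H$. Absorb: $C\oplus\mathbf G$ replaces every label $\mathbf G'(a)$ by $(\mathbf G'\cup\mathbf G)(a)$, and $i(C,R)\oplus\mathbf G=i(C\oplus\mathbf G,R)$. Simulation: for rule sets, $\mathrm R_1\preceq\mathrm R_2$ iff whenever $\mathcal G$ is derivable from $\mathcal G_1,\dots,\mathcal G_n$ using rules of $\mathrm R_1$, it is derivable from $\mathcal G_1,\dots,\mathcal G_n$ using rules of $\mathrm R_2$. An ordered rule set $\triangleright^{i_1}\mathrm R_1\cdots\triangleright^{i_k}\mathrm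 R_k$ ($i_j\in\{0,1\}$) is the rule set $\mathrm R_1\cup\dots\cup\mathrm R_k$ restricted to derivations that (read from top to bottom) first apply at least $i_1$ rules of $\mathrm R_1$, then at least $i_2$ rules of $\mathrm R_2$, etc.; a singleton $\{\rho\}$ is written $\rho$. *)

From Stdlib Require Import Relations.
From mathcomp Require Import all_boot all_fingroup.

Set Implicit Arguments.
Unset Strict Implicit.
Unset Printing Implicit Defensive.

Section GSequents.

Variables (U S : Type) (E : finType).

(** Letters of E ∪ Ē : [inl a] is the edge type [a], [inr a] is [ā]. *)
Definition letter := (E + E)%type.

Definition bar (x : letter) : letter :=
  match x with inl a => inr a | inr a => inl a end.

Definition bars (s : seq letter) : seq letter := rev (map bar s).

(** A g-sequent (V, E, L): the labelling [lab : U -> option S] encodes both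
    the vertex set V = {w | lab w <> None} and L : V -> S;
    [edges a] is the relation E_a. *)
Record gseq := GSeq { lab : U -> option S; edges : E -> U -> U -> Prop }.

Definition inV (G : gseq) (w : U) : Prop := lab G w <> None.

Definition gwf (G : gseq) : Prop :=
  forall a w u, edges G a w u -> inV G w /\ inV G u.

Definition Delta (G : gseq) : U * S -> Prop := fun p => lab G p.1 = Some p.2.

Definition lstep (G : gseq) (x : letter) (u w : U) : Prop :=
  match x with inl a => edges G a u w | inr a => edges G a w u end.

Fixpoint spath (G : gseq) (s : seq letter) (u w : U) : Prop :=
  match s with
  | [::] => u = w
  | x :: s' => exists v, lstep G x u v /\ spath G s' v w
  end.

Definition production := (letter * seq letter)%type.
Definition system := seq production.

Definition is_system (Gs : system) : Prop :=
  forall p, p \in Gs -> (bar p.1, bars p.2) \in Gs.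

Definition rewrite1 (Gs : system) (s t : seq letter) : Prop :=
  exists s1 s2 x r, (x, r) \in Gs /\ s = s1 ++ x :: s2 /\ t = s1 ++ r ++ s2.

Definition lang (Gs : system) (s : seq letter) : seq letter -> Prop :=
  fun t => clos_refl_trans (seq letter) (rewrite1 Gs) s t.

Definition lpath (G : gseq) (L : seq letter -> Prop) (u w : U) : Prop :=
  exists t, L t /\ spath G t u w.

(** Constraints: finite trees on vertices [cv i] (i : 'I_n) with directed
    edges [cedges], edge (i,j) being labelled by the language G'(a) where
    [clab i j = (G', a)]. *)
Record constraint (n : nat) := Constraint {
  cv : 'I_n -> U;
  cedges : seq ('I_n * 'I_n);
  clab : 'I_n -> 'I_n -> system * E }.

Definition cadj n (C : constraint n) : rel 'I_n :=
  fun i j => ((i, j) \in cedges C) || ((j, i) \in cedges C).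

Definition is_tree n (C : constraint n) : Prop :=
  [/\ 0 < n, uniq (cedges C),
      (forall e, e \in cedges C -> e.1 != e.2) /\
      (forall e, e \in cedges C -> (e.2, e.1) \notin cedges C),
      (size (cedges C)).+1 = n &
      (forall i j, connect (cadj C) i j)].

Definition is_constraint n (C : constraint n) : Prop :=
  [/\ injective (cv C), is_tree C &
      (forall e, e \in cedges C -> is_system (clab C e.1 e.2).1)].

Definition edge_lang n (C : constraint n) (i j : 'I_n) : seq letter -> Prop :=
  lang (clab C i j).1 [:: inl (clab C i j).2].

(** G satisfies C (the vertex inclusion is part of [init_concl] below). *)
Definition satisfies n (C : constraint n) (G : gseq) : Prop :=
  forall e, e \in cedges C -> lpath G (edge_lang C e.1 e.2) (cv C e.1) (cv C e.2).

Definition seq_constraint n := ('I_n -> S) -> (U * S -> Prop) -> Prop.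

Definition init_concl n (C : constraint n) (R : seq_constraint n) (G : gseq) : Prop :=
  [/\ gwf G, satisfies C G &
    exists Ls : 'I_n -> S,
      (forall i, lab G (cv C i) = Some (Ls i)) /\
      exists pi : 'S_n,
        R (fun i => Ls (pi i))
          (fun p => Delta G p /\ forall i, p <> (cv C i, Ls i))].

(** Horn rules: (true, a, s) is the forward rule h_f, (false, a, s) the
    backward rule h_b. *)
Definition horn := (bool * E * seq letter)%type.

Definition horn_sys (h : horn) : system :=
  let: (f, a, s) := h in
  if f then [:: (inl a, s); (inr a, bars s)]
  else [:: (inr a, s); (inl a, bars s)].

Definition hornH_sys (H : seq horn) : system := flatten (map horn_sys H).

Definition horn_step (h : horn) (P Q : gseq) : Prop :=
  let: (f, a, s) := h in
  gwf P /\ gwf Q /\ lab P = lab Q /\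
  exists w u, spath Q s w u /\
    let x := if f then w else u in
    let y := if f then u else w in
    ~ edges Q a x y /\
    (forall b v z, edges P b v z <-> (edges Q b v z \/ (b = a /\ v = x /\ z = y))).

(** Zero or more applications of rules of H, read top to bottom. *)
Definition horn_derives (H : seq horn) : gseq -> gseq -> Prop :=
  clos_refl_trans gseq (fun P Q => exists2 h, h \in H & horn_step h P Q).

Definition absorb n (C : constraint n) (Gs : system) : constraint n :=
  Constraint (cv C) (cedges C) (fun i j => ((clab C i j).1 ++ Gs, (clab C i j).2)).

End GSequents.

From Stdlib Require Import Relations.
From mathcomp Require Import all_boot all_fingroup.

Set Implicit Arguments.
Unset Strict Implicit.
Unset Printing Implicit Defensive.

(** A Horn rule only adds an edge [x -a-> y] to a g-sequent that already
    contains a path labelled [s] between the same endpoints, and the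
    productions of [G(h)] rewrite the letter [a] (or [ā]) into exactly that
    path (or its reversal [bars s]).  Hence every path of the premise is
    mirrored in the conclusion by a path whose label is a rewrite of the
    original label: we call this a path simulation ([path_sim]).

    Since Horn rules keep the labelling, the sequent part of the
    initial rule is untouched, and the theorem follows. *)

Section Absorption.

Variables (U S : Type) (E : finType).
Implicit Types (G P Q : gseq U S E) (Gs : system E) (s t : seq (letter E)).

Lemma spath_cat G s t u w :
  spath G (s ++ t) u w <-> exists v, spath G s u v /\ spath G t v w.
Proof.
elim: s u => [|x s IH] u /=.
  by split=> [h | [v [-> h]]]; first exists u.
split=> [[v [hx /IH [v' [h1 h2]]]] | [v' [[v [hx h1]] h2]]].
  by exists v'; split => //; exists v.
by exists v; split => //; apply/IH; exists v'.
Qed.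

Lemma spath_bars G s u w : spath G s u w -> spath G (bars s) w u.
Proof.
elim: s u => [|x s IH] u /= => [-> // | [v [hx hs]]].
rewrite /bars /= rev_cons -cats1; apply/spath_cat; exists v.
by split; [exact: IH | exists u; split => //; case: x hx].
Qed.

Lemma lang_ctx Gs s t p q : lang Gs s t -> lang Gs (p ++ s ++ q) (p ++ t ++ q).
Proof.
elim=> [{}s {}t [s1 [s2 [x [r [hin [-> ->]]]]]] | {}s | s1 s2 s3 _ h12 _ h23].
- apply: rt_step; exists (p ++ s1), (s2 ++ q), x, r.
  by rewrite -!catA.
- exact: rt_refl.
- exact: rt_trans h12 h23.
Qed.

Lemma lang_cat Gs s1 s2 t1 t2 :
  lang Gs s1 t1 -> lang Gs s2 t2 -> lang Gs (s1 ++ s2) (t1 ++ t2).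
Proof.
move=> h1 h2; apply: (@rt_trans _ _ _ (t1 ++ s2)).
  by have := lang_ctx [::] s2 h1.
by have := lang_ctx t1 [::] h2; rewrite !cats0.
Qed.

Lemma lang_mono Gs1 Gs2 s t :
  {subset Gs1 <= Gs2} -> lang Gs1 s t -> lang Gs2 s t.
Proof.
move=> sub; elim=> [{}s {}t [s1 [s2 [x [r [hin [-> ->]]]]]] | {}s | ? ? ? _ h1 _ h2].
- by apply: rt_step; exists s1, s2, x, r; split => //; apply: sub.
- exact: rt_refl.
- exact: rt_trans h1 h2.
Qed.

Lemma lang_production Gs x r : (x, r) \in Gs -> lang Gs [:: x] r.
Proof.
by move=> hin; apply: rt_step; exists [::], [::], x, r; rewrite cats0.
Qed.

Definition path_sim Gs P Q : Prop :=
  forall t u w, spath P t u w -> exists2 t', lang Gs t t' & spath Q t' u w.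

Lemma path_sim_refl Gs P : path_sim Gs P P.
Proof. by move=> t u w h; exists t => //; apply: rt_refl. Qed.

Lemma path_sim_trans Gs P Q G :
  path_sim Gs P Q -> path_sim Gs Q G -> path_sim Gs P G.
Proof.
move=> hPQ hQG t u w /hPQ [t' ht' /hQG [t'' ht'' p'']].
by exists t'' => //; apply: rt_trans ht' ht''.
Qed.

Lemma path_sim_mono Gs1 Gs2 P Q :
  {subset Gs1 <= Gs2} -> path_sim Gs1 P Q -> path_sim Gs2 P Q.
Proof.
by move=> sub hPQ t u w /hPQ [t' ht' p']; exists t' => //; apply: lang_mono ht'.
Qed.

Lemma lstep_sim Gs G x u w :
  lstep G x u w -> exists2 r, lang Gs [:: x] r & spath G r u w.
Proof. by exists [:: x]; [exact: rt_refl | exists w]. Qed.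

Lemma path_sim_letters Gs P Q :
  (forall x u w, lstep P x u w -> exists2 r, lang Gs [:: x] r & spath Q r u w) ->
  path_sim Gs P Q.
Proof.
move=> hx; elim=> [|x t IH] u w /=.
  by move=> ->; exists [::] => //; apply: rt_refl.
move=> [v [/hx [r hr pr] /IH [t' ht' pt']]].
by exists (r ++ t'); [exact: (lang_cat hr ht') | apply/spath_cat; exists v].
Qed.

(** One Horn step is a path simulation for its own system [G(h)]: an old
    edge is kept, and the new edge is replaced by the path [s] (or [bars s]
    when traversed backwards), which is exactly what [G(h)] produces. *)
Lemma horn_step_sim h P Q : horn_step h P Q -> path_sim (horn_sys h) P Q.
Proof.
case: h => [[f a] s]; case: f => -[_ [_ [_ [w [u [ps [_ hedges]]]]]]];
have ps' := spath_bars ps; apply: path_sim_letters => -[] b v1 v2 /= /hedges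
  [old | [<- [-> ->]]]; try by apply: lstep_sim.
(* the new edge, traversed forwards/backwards, for h_f and then for h_b *)
- by exists s => //; apply: lang_production; rewrite inE eqxx.
- by exists (bars s) => //; apply: lang_production; rewrite !inE eqxx orbT.
- by exists (bars s) => //; apply: lang_production; rewrite !inE eqxx orbT.
- by exists s => //; apply: lang_production; rewrite inE eqxx.
Qed.

Lemma horn_step_frame h P Q : horn_step h P Q -> gwf Q /\ lab P = lab Q.
Proof. by case: h => [[f a] s] [_ [wfQ [labPQ _]]]. Qed.

Lemma horn_sys_sub (H : seq (horn E)) h :
  h \in H -> {subset horn_sys h <= hornH_sys H}.
Proof. by move=> hH pr hp; apply/flattenP; exists (horn_sys h); first exact: map_f. Qed.

Lemma horn_derives_sim (H : seq (horn E)) G0 G :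
  horn_derives H G0 G -> gwf G0 ->
  [/\ gwf G, lab G = lab G0 & path_sim (hornH_sys H) G0 G].
Proof.
elim=> [P Q [h hH hst] _ | P wfP | P Q G' _ IH1 _ IH2 wfP].
- have [wfQ labPQ] := horn_step_frame hst.
  split => //; apply: path_sim_mono (horn_sys_sub hH) _.
  exact: horn_step_sim.
- by split => //; apply: path_sim_refl.
- have [wfQ labQ simPQ] := IH1 wfP; have [wfG labG simQG] := IH2 wfQ.
  by split => //; [rewrite labG | apply: path_sim_trans simQG].
Qed.

Lemma satisfies_absorb n (C : constraint U E n) Gs P Q :
  path_sim Gs P Q -> satisfies C P -> satisfies (absorb C Gs) Q.
Proof.
move=> sim sat e /sat [t [ht /sim [t' ht' pt']]].
exists t'; split => //; apply: rt_trans (lang_mono _ ht) (lang_mono _ ht').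
- by move=> pr hp; rewrite mem_cat hp.
- by move=> pr hp; rewrite mem_cat hp orbT.
Qed.

End Absorption.

Theorem mainTheorem4 (U S : Type) (E : finType)
  (S_count_inf : exists f : nat -> S, bijective f)
  (E_nonempty : 0 < #|E|)
  (n : nat) (C : constraint U E n) (R : seq_constraint U S n)
  (H : seq (horn E)) (G0 G : gseq U S E) :
  is_constraint C ->
  init_concl C R G0 ->
  horn_derives H G0 G ->
  init_concl (absorb C (hornH_sys H)) R G.
Proof.
move=> _ [wf0 sat0 [Ls [hLs [pi hR]]]] /horn_derives_sim.
case/(_ wf0) => wfG labG sim; split => //.
- exact: satisfies_absorb sim sat0.
- exists Ls; split; first by move=> i; rewrite labG; apply: hLs.
  by exists pi; rewrite /Delta labG.
Qed.
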